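(* If $X$ is a space such that $\mathbf{w}(X)$ and $\mathbf{aw}(X)$ are not homotopy equivalent, then $X$ is not homotopy equivalent to any first countable space.
   Context: A loop is trivial if path-homotopic to a constant loop. A sequence of loops $\alpha_n$ based at $x$ is a null-sequence if every neighborhood of $x$ contains $\alpha_n([0,1])$ for all but finitely many $n$. $\mathbf{aw}(X)=\{x\in X\mid \text{there is a null-sequence of non-trivial loops based at }x\}$. $\mathbf{w}(X)$ is the subspace of points $x$ at which $X$ is not semilocally simply connected, i.e. every neighborhood of $x$ contains a loop based at $x$ that is non-trivial in $X$. *)

From Stdlib Require Import Reals.
Open Scope R_scope.

Record space := Space {
  pt :> Type;
  isopen : (pt -> Prop) -> Prop;
  open_full : isopen (fun _ => True);
  open_inter : forall U V, isopen U -> isopen V -> isopen (fun x => U x /\ V x);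
  open_union : forall F : (pt -> Prop) -> Prop,
      (forall U, F U -> isopen U) -> isopen (fun x => exists U, F U /\ U x)
}.
Arguments isopen {s} _.

Inductive generated {T : Type} (S : (T -> Prop) -> Prop) : (T -> Prop) -> Prop :=
| gen_sub : forall U, S U -> generated S U
| gen_full : generated S (fun _ => True)
| gen_inter : forall U V, generated S U -> generated S V ->
    generated S (fun x => U x /\ V x)
| gen_union : forall F : (T -> Prop) -> Prop,
    (forall U, F U -> generated S U) -> generated S (fun x => exists U, F U /\ U x).

Definition gen_space {T : Type} (S : (T -> Prop) -> Prop) : space :=
  @Space T (generated S) (gen_full S) (gen_inter S) (gen_union S).

Definition continuous {X Y : space} (f : X -> Y) : Prop :=
  forall V : Y -> Prop, isopen V -> isopen (fun x => V (f x)).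

Definition subspace (X : space) (P : X -> Prop) : space :=
  gen_space (fun U : {x : X | P x} -> Prop =>
    exists V : X -> Prop, isopen V /\ forall z, U z <-> V (proj1_sig z)).

Definition prod_space (X Y : space) : space :=
  gen_space (fun W : (X * Y)%type -> Prop =>
    exists (U : X -> Prop) (V : Y -> Prop), isopen U /\ isopen V /\
      forall p, W p <-> (U (fst p) /\ V (snd p))).

Definition R_space : space :=
  gen_space (fun U : R -> Prop => exists c r, forall y, U y <-> Rabs (y - c) < r).

Definition I : space := subspace R_space (fun t => 0 <= t <= 1).
Definition I0 : I := exist _ 0 (conj (Rle_refl 0) Rle_0_1).
Definition I1 : I := exist _ 1 (conj Rle_0_1 (Rle_refl 1)).

Definition nbhd {X : space} (x : X) (N : X -> Prop) : Prop :=
  exists U, isopen U /\ U x /\ forall y, U y -> N y.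

Definition loop_at {X : space} (x : X) (alpha : I -> X) : Prop :=
  continuous alpha /\ alpha I0 = x /\ alpha I1 = x.

Definition trivial_loop {X : space} (x : X) (alpha : I -> X) : Prop :=
  exists H : prod_space I I -> X, continuous H /\
    (forall s, H (s, I0) = alpha s) /\ (forall s, H (s, I1) = x) /\
    (forall t, H (I0, t) = x) /\ (forall t, H (I1, t) = x).

(** w(X): points at which X is not semilocally simply connected. *)
Definition w_pred (X : space) (x : X) : Prop :=
  forall N, nbhd x N -> exists alpha : I -> X,
    loop_at x alpha /\ (forall s, N (alpha s)) /\ ~ trivial_loop x alpha.

Definition aw_pred (X : space) (x : X) : Prop :=
  exists alpha : nat -> I -> X,
    (forall n, loop_at x (alpha n) /\ ~ trivial_loop x (alpha n)) /\
    (forall N, nbhd x N -> exists n0, forall n, (n0 <= n)%nat ->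
        forall s, N (alpha n s)).

Definition w_space (X : space) : space := subspace X (w_pred X).
Definition aw_space (X : space) : space := subspace X (aw_pred X).

Definition homotopic {X Y : space} (f g : X -> Y) : Prop :=
  exists H : prod_space X I -> Y, continuous H /\
    (forall x, H (x, I0) = f x) /\ (forall x, H (x, I1) = g x).

Definition homotopy_equivalent (X Y : space) : Prop :=
  exists (f : X -> Y) (g : Y -> X), continuous f /\ continuous g /\
    homotopic (fun x => g (f x)) (fun x => x) /\
    homotopic (fun y => f (g y)) (fun y => y).

Definition first_countable (X : space) : Prop :=
  forall x : X, exists B : nat -> X -> Prop,
    (forall n, nbhd x (B n)) /\
    (forall N, nbhd x N -> exists n, forall y, B n y -> N y).

(* If [h] is homotopic to the identity, a loop [b] whose image [h o b] is null-homotopic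
   is itself null-homotopic: the free homotopy traced along [b], stacked on a
   null-homotopy of [h o b], is a square with top edge [b], constant bottom edge and
   equal sides, and such a top edge contracts.  Hence the two halves of a homotopy
   equivalence [X ~ Y], and every stage [H (-, t)] of a homotopy [g o f ~ id], carry
   [w] into [w] and [aw] into [aw].  In the first countable space [Y] the two sets
   coincide, so [g o f] maps [w(X)] into [aw(X)], which lies inside [w(X)]; the homotopy
   restricts to both subspaces, so the inclusion [aw(X) -> w(X)] and
   [g o f : w(X) -> aw(X)] are inverse homotopy equivalences. *)

From Stdlib Require Import Reals Lra Lia.
From Stdlib Require Import FunctionalExtensionality PropExtensionality ClassicalEpsilon.
Open Scope R_scope.

Lemma pred_ext {T : Type} (P Q : T -> Prop) : (forall x, P x <-> Q x) -> P = Q.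
Proof.
  intro H; apply functional_extensionality; intro x.
  apply propositional_extensionality, H.
Qed.

Lemma isopen_ext {X : space} (U V : X -> Prop) :
  isopen U -> (forall x, U x <-> V x) -> isopen V.
Proof. intros HU H; rewrite <- (pred_ext _ _ H); exact HU. Qed.

Lemma isopen_local {X : space} (V : X -> Prop) : (forall x, V x -> nbhd x V) -> isopen V.
Proof.
  intro H.
  apply (isopen_ext (fun x => exists U, (isopen U /\ forall y, U y -> V y) /\ U x)).
  - apply open_union. intros U [HU _]; exact HU.
  - intro x; split.
    + intros [U [[_ HUV] Ux]]; auto.
    + intro Vx; destruct (H x Vx) as [U [HU [Ux HUV]]]; exists U; auto.
Qed.

Lemma isopen_or {X : space} (U V : X -> Prop) :
  isopen U -> isopen V -> isopen (fun x => U x \/ V x).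
Proof.
  intros HU HV.
  apply (isopen_ext (fun x => exists W, (W = U \/ W = V) /\ W x)).
  - apply open_union. intros W [-> | ->]; assumption.
  - intro x; split.
    + intros [W [[-> | ->] Wx]]; auto.
    + intros [Ux|Vx]; eauto.
Qed.

Lemma isopen_empty {X : space} : isopen (fun _ : X => False).
Proof.
  apply (isopen_ext (fun x => exists W : X -> Prop, False /\ W x)).
  - apply open_union. intros W [].
  - intro x; split; [intros [W [[] _]] | intros []].
Qed.

Lemma nbhd_mono {X : space} (x : X) (N M : X -> Prop) :
  nbhd x N -> (forall y, N y -> M y) -> nbhd x M.
Proof. intros [U [HU [Ux HUN]]] HNM; exists U; auto. Qed.

Lemma nbhd_and {X : space} (x : X) (N M : X -> Prop) :
  nbhd x N -> nbhd x M -> nbhd x (fun y => N y /\ M y).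
Proof.
  intros [U [HU [Ux HUN]]] [V [HV [Vx HVM]]].
  exists (fun y => U y /\ V y); split; [apply open_inter; auto|split; auto].
  intros y [Uy Vy]; auto.
Qed.

Lemma nbhd_preimage {X Y : space} (f : X -> Y) (x : X) (N : Y -> Prop) :
  continuous f -> nbhd (f x) N -> nbhd x (fun y => N (f y)).
Proof.
  intros Cf [U [HU [Ux HUN]]].
  exists (fun y => U (f y)); split; [apply Cf; auto|split; auto].
Qed.

Lemma continuous_into_generated {Z : space} {T : Type} (S : (T -> Prop) -> Prop) (f : Z -> T) :
  (forall U, S U -> isopen (fun x => U (f x))) -> @continuous Z (gen_space S) f.
Proof.
  intros HS V HV. simpl in HV. induction HV.
  - auto.
  - apply open_full.
  - apply open_inter; auto.
  - apply (isopen_ext (fun x => exists W, (exists U, F U /\ W = (fun y => U (f y))) /\ W x)).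
    + apply open_union. intros W [U [FU ->]]; auto.
    + intro x; split.
      * intros [W [[U [FU ->]] Wx]]; eauto.
      * intros [U [FU Ux]]. exists (fun y => U (f y)); eauto.
Qed.

Lemma continuous_comp {X Y Z : space} (f : X -> Y) (g : Y -> Z) :
  continuous f -> continuous g -> continuous (fun x => g (f x)).
Proof. intros Hf Hg V HV. apply (Hf _ (Hg _ HV)). Qed.

Lemma continuous_id {X : space} : continuous (fun x : X => x).
Proof. intros V HV; exact HV. Qed.

Lemma continuous_const {X Y : space} (c : Y) : continuous (fun _ : X => c).
Proof.
  intros V HV. destruct (classic (V c)) as [H|H].
  - apply (isopen_ext (fun _ => True)); [apply open_full|tauto].
  - apply (isopen_ext (fun _ => False)); [apply isopen_empty|tauto].
Qed.

Lemma continuous_fst {X Y : space} : @continuous (prod_space X Y) X fst.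
Proof.
  intros U HU. apply gen_sub. exists U, (fun _ => True).
  split; [exact HU|split; [apply open_full|]]. intro p; tauto.
Qed.

Lemma continuous_snd {X Y : space} : @continuous (prod_space X Y) Y snd.
Proof.
  intros U HU. apply gen_sub. exists (fun _ => True), U.
  split; [apply open_full|split; [exact HU|]]. intro p; tauto.
Qed.

Lemma continuous_pair {Z X Y : space} (f : Z -> X) (g : Z -> Y) :
  continuous f -> continuous g -> @continuous Z (prod_space X Y) (fun z => (f z, g z)).
Proof.
  intros Hf Hg. apply continuous_into_generated. intros W [U [V [HU [HV HW]]]].
  apply (isopen_ext (fun z => U (f z) /\ V (g z))).
  - apply open_inter; auto.
  - intro z; rewrite HW; simpl; tauto.
Qed.

Lemma continuous_slice {X Y Z : space} (H : prod_space X Y -> Z) (t : Y) :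
  continuous H -> continuous (fun x => H (x, t)).
Proof.
  intro CH. apply (@continuous_comp X (prod_space X Y) Z (fun x => (x, t)) H); auto.
  apply continuous_pair; [apply continuous_id|apply continuous_const].
Qed.

Lemma continuous_proj1_sig {X : space} (P : X -> Prop) :
  @continuous (subspace X P) X (@proj1_sig _ _).
Proof. intros V HV. apply gen_sub. exists V. split; [exact HV|]. intro z; tauto. Qed.

Lemma continuous_into_subspace {Z X : space} (P : X -> Prop) (f : Z -> subspace X P) :
  continuous (fun z => proj1_sig (f z)) -> continuous f.
Proof.
  intro Hf. apply continuous_into_generated. intros U [V [HV HU]].
  apply (isopen_ext (fun z => V (proj1_sig (f z)))).
  - apply Hf; exact HV.
  - intro z; rewrite HU; tauto.
Qed.

Lemma subspace_eq {X : space} (P : X -> Prop) (a b : subspace X P) :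
  proj1_sig a = proj1_sig b -> a = b.
Proof. destruct a, b; simpl; intro; subst; f_equal; apply proof_irrelevance. Qed.

Lemma continuous_pasting {Z X : space} (A B : Z -> Prop) (f f1 f2 : Z -> X) :
  isopen (fun z => ~ A z) -> isopen (fun z => ~ B z) -> (forall z, A z \/ B z) ->
  (forall z, A z -> f z = f1 z) -> (forall z, B z -> f z = f2 z) ->
  continuous f1 -> continuous f2 -> continuous f.
Proof.
  intros HA HB HAB E1 E2 C1 C2 V HV.
  apply (isopen_ext (fun z => (V (f1 z) \/ ~ A z) /\ (V (f2 z) \/ ~ B z))).
  - apply open_inter; apply isopen_or; auto.
  - intro z. split.
    + intros [[H1|H1] [H2|H2]]; destruct (HAB z) as [a|b];
        try (rewrite E1; auto; fail); try (rewrite E2; auto; fail); tauto.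
    + intro Hv. split.
      * destruct (classic (A z)) as [a|a]; [left; rewrite <- E1; auto|right; auto].
      * destruct (classic (B z)) as [b|b]; [left; rewrite <- E2; auto|right; auto].
Qed.

Definition rcontinuous {Z : space} (f : Z -> R) : Prop :=
  forall z eps, 0 < eps -> nbhd z (fun y => Rabs (f y - f z) < eps).

Lemma Rabs_lt_iff x e : Rabs x < e <-> - e < x < e.
Proof.
  split.
  - intro H. apply Rabs_def2 in H. lra.
  - intros [H1 H2]. apply Rabs_def1; lra.
Qed.

Lemma rcontinuous_continuous {Z : space} (f : Z -> R) :
  rcontinuous f -> @continuous Z R_space f.
Proof.
  intro Hf. apply continuous_into_generated. intros U [c [r HU]].
  apply isopen_local. intros z Hz. simpl in Hz. rewrite HU in Hz.
  apply (nbhd_mono _ _ _ (Hf z (r - Rabs (f z - c)) ltac:(lra))).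
  intros y Hy. simpl. rewrite HU.
  replace (f y - c) with ((f y - f z) + (f z - c)) by ring.
  eapply Rle_lt_trans; [apply Rabs_triang|]. lra.
Qed.

Lemma continuous_rcontinuous {Z : space} (f : Z -> R) :
  @continuous Z R_space f -> rcontinuous f.
Proof.
  intros Hf z eps Heps.
  exists (fun y => Rabs (f y - f z) < eps). split; [|split].
  - apply (Hf (fun y => Rabs (y - f z) < eps)). apply gen_sub. exists (f z), eps. tauto.
  - simpl. unfold Rminus. rewrite Rplus_opp_r, Rabs_R0. exact Heps.
  - auto.
Qed.

Lemma rcontinuous_const {Z : space} (c : R) : rcontinuous (fun _ : Z => c).
Proof.
  intros z eps He. exists (fun _ => True). split; [apply open_full|split; [trivial|]].
  intros. unfold Rminus. rewrite Rplus_opp_r, Rabs_R0. exact He.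
Qed.

Lemma rcontinuous_plus {Z : space} (f g : Z -> R) :
  rcontinuous f -> rcontinuous g -> rcontinuous (fun z => f z + g z).
Proof.
  intros Hf Hg z eps He.
  apply (nbhd_mono _ _ _ (nbhd_and _ _ _ (Hf z (eps/2) ltac:(lra)) (Hg z (eps/2) ltac:(lra)))).
  intros y [Hu Hv]. apply Rabs_lt_iff in Hu, Hv. apply Rabs_lt_iff; lra.
Qed.

Lemma rcontinuous_mult {Z : space} (f g : Z -> R) :
  rcontinuous f -> rcontinuous g -> rcontinuous (fun z => f z * g z).
Proof.
  intros Hf Hg z eps He.
  set (a := Rabs (f z) + 1). set (b := Rabs (g z) + 1).
  assert (Ha : 0 < a) by (pose proof (Rabs_pos (f z)); unfold a; lra).
  assert (Hb : 0 < b) by (pose proof (Rabs_pos (g z)); unfold b; lra).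
  set (e := Rmin 1 (eps / (2 * (a + b)))).
  assert (He0 : 0 < e).
  { unfold e, Rmin; destruct (Rle_dec 1 (eps / (2 * (a + b)))); [lra|].
    apply Rdiv_lt_0_compat; lra. }
  assert (He1 : e <= 1) by (unfold e; apply Rmin_l).
  assert (He2 : e * (2 * (a + b)) <= eps).
  { assert (e <= eps / (2 * (a + b))) by (unfold e; apply Rmin_r).
    apply (Rmult_le_compat_r (2 * (a+b))) in H; [|lra].
    unfold Rdiv in H. rewrite Rmult_assoc, Rinv_l in H; lra. }
  apply (nbhd_mono _ _ _ (nbhd_and _ _ _ (Hf z e He0) (Hg z e He0))).
  intros y [Hu Hv].
  replace (f y * g y - f z * g z) with (f y * (g y - g z) + g z * (f y - f z)) by ring.
  eapply Rle_lt_trans; [apply Rabs_triang|]. rewrite !Rabs_mult.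
  assert (Rabs (f y) <= a).
  { replace (f y) with ((f y - f z) + f z) by ring.
    eapply Rle_trans; [apply Rabs_triang|]. unfold a; lra. }
  assert (Rabs (g z) <= b) by (unfold b; lra).
  pose proof (Rabs_pos (f y)). pose proof (Rabs_pos (g z)).
  pose proof (Rabs_pos (g y - g z)). pose proof (Rabs_pos (f y - f z)).
  assert (Rabs (f y) * Rabs (g y - g z) <= a * e) by (apply Rmult_le_compat; lra).
  assert (Rabs (g z) * Rabs (f y - f z) <= b * e) by (apply Rmult_le_compat; lra).
  nra.
Qed.

Lemma rcontinuous_minus {Z : space} (f g : Z -> R) :
  rcontinuous f -> rcontinuous g -> rcontinuous (fun z => f z - g z).
Proof.
  intros Hf Hg.
  replace (fun z => f z - g z) with (fun z => f z + (-1) * g z)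
    by (apply functional_extensionality; intro; ring).
  apply rcontinuous_plus, rcontinuous_mult; auto using rcontinuous_const.
Qed.

Lemma Rmin_Rabs_lt a b c d e :
  Rabs (a - c) < e -> Rabs (b - d) < e -> Rabs (Rmin a b - Rmin c d) < e.
Proof. rewrite !Rabs_lt_iff. unfold Rmin. destruct (Rle_dec a b), (Rle_dec c d); lra. Qed.

Lemma Rmax_Rabs_lt a b c d e :
  Rabs (a - c) < e -> Rabs (b - d) < e -> Rabs (Rmax a b - Rmax c d) < e.
Proof. rewrite !Rabs_lt_iff. unfold Rmax. destruct (Rle_dec a b), (Rle_dec c d); lra. Qed.

Lemma rcontinuous_min {Z : space} (f g : Z -> R) :
  rcontinuous f -> rcontinuous g -> rcontinuous (fun z => Rmin (f z) (g z)).
Proof.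
  intros Hf Hg z eps He.
  apply (nbhd_mono _ _ _ (nbhd_and _ _ _ (Hf z eps He) (Hg z eps He))).
  intros y [Hu Hv]. apply Rmin_Rabs_lt; auto.
Qed.

Lemma rcontinuous_max {Z : space} (f g : Z -> R) :
  rcontinuous f -> rcontinuous g -> rcontinuous (fun z => Rmax (f z) (g z)).
Proof.
  intros Hf Hg z eps He.
  apply (nbhd_mono _ _ _ (nbhd_and _ _ _ (Hf z eps He) (Hg z eps He))).
  intros y [Hu Hv]. apply Rmax_Rabs_lt; auto.
Qed.

Lemma isopen_not_Rle {Z : space} (f g : Z -> R) :
  rcontinuous f -> rcontinuous g -> isopen (fun z => ~ f z <= g z).
Proof.
  intros Hf Hg. apply isopen_local. intros z Hz.
  apply (nbhd_mono _ _ _ (rcontinuous_minus f g Hf Hg z (f z - g z) ltac:(lra))).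
  intros y Hy. apply Rabs_lt_iff in Hy. lra.
Qed.

Definition val (s : I) : R := proj1_sig s.

Lemma val_bounds (s : I) : 0 <= val s <= 1.
Proof. exact (proj2_sig s). Qed.

Lemma val_I0 : val I0 = 0. Proof. reflexivity. Qed.
Lemma val_I1 : val I1 = 1. Proof. reflexivity. Qed.

Lemma rcontinuous_val {Z : space} (g : Z -> I) : continuous g -> rcontinuous (fun z => val (g z)).
Proof.
  intro Hg. apply continuous_rcontinuous.
  apply (continuous_comp g (@proj1_sig _ _)); auto. apply continuous_proj1_sig.
Qed.

Definition clamp (r : R) : R := Rmax 0 (Rmin 1 r).

Lemma clamp_bounds r : 0 <= clamp r <= 1.
Proof. unfold clamp, Rmax, Rmin. destruct (Rle_dec 1 r), (Rle_dec 0 _); lra. Qed.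

Lemma clamp_id r : 0 <= r <= 1 -> clamp r = r.
Proof. intros. unfold clamp, Rmax, Rmin. destruct (Rle_dec 1 r), (Rle_dec 0 _); lra. Qed.

Lemma clamp_le0 r : r <= 0 -> clamp r = 0.
Proof. intros. unfold clamp, Rmax, Rmin. destruct (Rle_dec 1 r), (Rle_dec 0 _); lra. Qed.

Lemma clamp_ge1 r : 1 <= r -> clamp r = 1.
Proof. intros. unfold clamp, Rmax, Rmin. destruct (Rle_dec 1 r), (Rle_dec 0 _); lra. Qed.

Definition to_I (r : R) : I := exist _ (clamp r) (clamp_bounds r).

Lemma to_I_val s : to_I (val s) = s.
Proof. apply subspace_eq. apply clamp_id, val_bounds. Qed.

Lemma to_I_le0 r : r <= 0 -> to_I r = I0.
Proof. intro. apply subspace_eq. apply clamp_le0; auto. Qed.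

Lemma to_I_ge1 r : 1 <= r -> to_I r = I1.
Proof. intro. apply subspace_eq. apply clamp_ge1; auto. Qed.

Lemma continuous_to_I {Z : space} (f : Z -> R) : rcontinuous f -> continuous (fun z => to_I (f z)).
Proof.
  intro Hf. apply continuous_into_subspace, rcontinuous_continuous.
  unfold clamp. apply rcontinuous_max; [apply rcontinuous_const|].
  apply rcontinuous_min; [apply rcontinuous_const|exact Hf].
Qed.

Ltac solve_rcontinuous := repeat (first
  [ apply rcontinuous_val, continuous_fst
  | apply rcontinuous_val, continuous_snd
  | apply rcontinuous_const
  | match goal with
    | |- rcontinuous (fun z => @?f z + @?g z) => apply (rcontinuous_plus f g)
    | |- rcontinuous (fun z => @?f z * @?g z) => apply (rcontinuous_mult f g)
    | |- rcontinuous (fun z => @?f z - @?g z) => apply (rcontinuous_minus f g)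
    | |- rcontinuous (fun z => Rmin (@?f z) (@?g z)) => apply (rcontinuous_min f g)
    end ]).

Section Squares.

Variable X : space.

Definition stack (Q P : prod_space I I -> X) (z : prod_space I I) : X :=
  let w := val (snd z) in
  if Rle_dec (1/2) w then Q (fst z, to_I (2 * w - 1)) else P (fst z, to_I (1 - 2 * w)).

Lemma continuous_stack (Q P : prod_space I I -> X) :
  continuous Q -> continuous P -> (forall p, Q (p, I0) = P (p, I0)) -> continuous (stack Q P).
Proof.
  intros CQ CP E.
  apply (continuous_pasting (fun z : prod_space I I => 1/2 <= val (snd z))
           (fun z : prod_space I I => val (snd z) <= 1/2) _
           (fun z : prod_space I I => Q (fst z, to_I (2 * val (snd z) - 1)))
           (fun z : prod_space I I => P (fst z, to_I (1 - 2 * val (snd z))))).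
  - apply isopen_not_Rle; solve_rcontinuous.
  - apply isopen_not_Rle; solve_rcontinuous.
  - intro z; lra.
  - intros z Hz. unfold stack. destruct (Rle_dec _ _); [reflexivity|lra].
  - intros z Hz. unfold stack. destruct (Rle_dec _ _); [|reflexivity].
    rewrite !to_I_le0 by lra. apply E.
  - apply (@continuous_comp _ (prod_space I I) _ (fun z : prod_space I I => (fst z, to_I (2 * val (snd z) - 1))) Q); auto.
    apply continuous_pair; [apply continuous_fst|apply continuous_to_I; solve_rcontinuous].
  - apply (@continuous_comp _ (prod_space I I) _ (fun z : prod_space I I => (fst z, to_I (1 - 2 * val (snd z)))) P); auto.
    apply continuous_pair; [apply continuous_fst|apply continuous_to_I; solve_rcontinuous].
Qed.

Lemma stack_top (Q P : prod_space I I -> X) p : stack Q P (p, I1) = Q (p, I1).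
Proof.
  unfold stack; cbn [fst snd]. rewrite val_I1.
  destruct (Rle_dec _ _); [|lra]. rewrite to_I_ge1 by lra. reflexivity.
Qed.

Lemma stack_bottom (Q P : prod_space I I -> X) p : stack Q P (p, I0) = P (p, I1).
Proof.
  unfold stack; cbn [fst snd]. rewrite val_I0.
  destruct (Rle_dec _ _); [lra|]. rewrite to_I_ge1 by lra. reflexivity.
Qed.

Lemma stack_sides (Q P : prod_space I I -> X) w :
  (forall t, Q (I1, t) = Q (I0, t)) -> (forall t, P (I1, t) = P (I0, t)) ->
  stack Q P (I1, w) = stack Q P (I0, w).
Proof. intros EQ EP. unfold stack; cbn [fst snd]. destruct (Rle_dec _ _); auto. Qed.

(* For [u <= 1/2] the top edge of the square is pushed down through the square onto
   the path "left side down, bottom, right side up"; as the sides agree and the bottom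
   is constant, for [u >= 1/2] that path is the left side run down and back, which
   retracts along itself onto its endpoint. *)
Definition contraction_shift (u : R) : R := Rmin u (1/2) / 2.
Definition contraction_x (s u : R) : R :=
  (s - contraction_shift u) * (1 + 4 * contraction_shift u).
Definition contraction_y1 (s u : R) : R := 1 - Rmin (2 * u) (Rmin (4 * s) (4 - 4 * s)).
Definition contraction_y2 (s u : R) : R := 1 - Rmin (2 - 2 * u) (Rmin (4 * s) (4 - 4 * s)).

Definition square_contraction (S : prod_space I I -> X) (z : prod_space I I) : X :=
  let s := val (fst z) in let u := val (snd z) in
  if Rle_dec u (1/2) then S (to_I (contraction_x s u), to_I (contraction_y1 s u))
  else S (I0, to_I (contraction_y2 s u)).

Variable S : prod_space I I -> X.
Hypothesis S_continuous : continuous S.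
Hypothesis S_sides : forall w, S (I1, w) = S (I0, w).
Hypothesis S_bottom : forall p, S (p, I0) = S (I0, I0).

Lemma continuous_square_contraction : continuous (square_contraction S).
Proof.
  apply (continuous_pasting (fun z : prod_space I I => val (snd z) <= 1/2)
           (fun z : prod_space I I => 1/2 <= val (snd z)) _
           (fun z : prod_space I I => S (to_I (contraction_x (val (fst z)) (val (snd z))),
                        to_I (contraction_y1 (val (fst z)) (val (snd z)))))
           (fun z : prod_space I I => S (I0, to_I (contraction_y2 (val (fst z)) (val (snd z)))))).
  - apply isopen_not_Rle; solve_rcontinuous.
  - apply isopen_not_Rle; solve_rcontinuous.
  - intro z; lra.
  - intros z Hz. unfold square_contraction. destruct (Rle_dec _ _); [reflexivity|lra].
  - intros z Hz. unfold square_contraction. destruct (Rle_dec _ _); [|reflexivity].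
    assert (Hu : val (snd z) = 1/2) by lra.
    rewrite Hu. set (s := val (fst z)).
    assert (Hshift : contraction_shift (1/2) = 1/4)
      by (unfold contraction_shift, Rmin; destruct (Rle_dec _ _); lra).
    assert (Hy : contraction_y1 s (1/2) = contraction_y2 s (1/2))
      by (unfold contraction_y1, contraction_y2; f_equal; f_equal; lra).
    rewrite Hy. unfold contraction_x. rewrite Hshift.
    destruct (Rle_dec s (1/4)); [rewrite to_I_le0 by lra; reflexivity|].
    destruct (Rle_dec (3/4) s); [rewrite to_I_ge1 by lra; apply S_sides|].
    assert (Hy2 : contraction_y2 s (1/2) = 0)
      by (unfold contraction_y2, Rmin; repeat destruct (Rle_dec _ _); lra).
    rewrite Hy2, (to_I_le0 0) by lra. rewrite S_bottom. symmetry; apply S_bottom.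
  - apply (@continuous_comp _ (prod_space I I) _ (fun z : prod_space I I => (to_I (contraction_x (val (fst z)) (val (snd z))),
                                      to_I (contraction_y1 (val (fst z)) (val (snd z))))) S); auto.
    unfold contraction_x, contraction_shift, contraction_y1, Rdiv.
    apply continuous_pair; apply continuous_to_I; solve_rcontinuous.
  - apply (@continuous_comp _ (prod_space I I) _ (fun z : prod_space I I => (I0, to_I (contraction_y2 (val (fst z)) (val (snd z))))) S); auto.
    unfold contraction_y2.
    apply continuous_pair; [apply continuous_const|apply continuous_to_I; solve_rcontinuous].
Qed.

Lemma square_contraction_bottom s : square_contraction S (s, I0) = S (s, I1).
Proof.
  unfold square_contraction; cbn [fst snd]. rewrite val_I0.
  destruct (Rle_dec _ _); [|lra]. pose proof (val_bounds s).
  assert (Hshift : contraction_shift 0 = 0)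
    by (unfold contraction_shift, Rmin; destruct (Rle_dec _ _); lra).
  assert (Hy : contraction_y1 (val s) 0 = 1)
    by (unfold contraction_y1, Rmin; repeat destruct (Rle_dec _ _); lra).
  unfold contraction_x. rewrite Hshift, Hy, (to_I_ge1 1) by lra.
  replace ((val s - 0) * (1 + 4 * 0)) with (val s) by ring.
  rewrite to_I_val. reflexivity.
Qed.

Lemma square_contraction_top s : square_contraction S (s, I1) = S (I0, I1).
Proof.
  unfold square_contraction; cbn [fst snd]. rewrite val_I1.
  destruct (Rle_dec _ _); [lra|]. pose proof (val_bounds s).
  assert (Hy : contraction_y2 (val s) 1 = 1)
    by (unfold contraction_y2, Rmin; repeat destruct (Rle_dec _ _); lra).
  rewrite Hy, (to_I_ge1 1) by lra. reflexivity.
Qed.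

Lemma square_contraction_left t : square_contraction S (I0, t) = S (I0, I1).
Proof.
  unfold square_contraction; cbn [fst snd]. rewrite val_I0. pose proof (val_bounds t).
  destruct (Rle_dec _ _).
  - assert (0 <= contraction_shift (val t))
      by (unfold contraction_shift, Rmin; destruct (Rle_dec _ _); lra).
    assert (Hy : contraction_y1 0 (val t) = 1)
      by (unfold contraction_y1, Rmin; repeat destruct (Rle_dec _ _); lra).
    rewrite Hy, (to_I_ge1 1), to_I_le0 by (unfold contraction_x; nra). reflexivity.
  - assert (Hy : contraction_y2 0 (val t) = 1)
      by (unfold contraction_y2, Rmin; repeat destruct (Rle_dec _ _); lra).
    rewrite Hy, (to_I_ge1 1) by lra. reflexivity.
Qed.

Lemma square_contraction_right t : square_contraction S (I1, t) = S (I0, I1).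
Proof.
  unfold square_contraction; cbn [fst snd]. rewrite val_I1. pose proof (val_bounds t).
  destruct (Rle_dec _ _).
  - assert (0 <= contraction_shift (val t) <= 1/4)
      by (unfold contraction_shift, Rmin; destruct (Rle_dec _ _); lra).
    assert (Hy : contraction_y1 1 (val t) = 1)
      by (unfold contraction_y1, Rmin; repeat destruct (Rle_dec _ _); lra).
    rewrite Hy, !to_I_ge1 by (unfold contraction_x; nra). apply S_sides.
  - assert (Hy : contraction_y2 1 (val t) = 1)
      by (unfold contraction_y2, Rmin; repeat destruct (Rle_dec _ _); lra).
    rewrite Hy, (to_I_ge1 1) by lra. reflexivity.
Qed.

Lemma trivial_loop_square_top : trivial_loop (S (I0, I1)) (fun s => S (s, I1)).
Proof.
  exists (square_contraction S).
  split; [exact continuous_square_contraction|].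
  split; [exact square_contraction_bottom|].
  split; [exact square_contraction_top|].
  split; [exact square_contraction_left|exact square_contraction_right].
Qed.

End Squares.

Definition reflects_trivial_loops {X Y : space} (f : X -> Y) : Prop :=
  forall x a, loop_at x a -> trivial_loop (f x) (fun s => f (a s)) -> trivial_loop x a.

Lemma loop_at_comp {X Y : space} (f : X -> Y) x a :
  continuous f -> loop_at x a -> loop_at (f x) (fun s => f (a s)).
Proof.
  intros Cf [Ca [a0 a1]]. split; [apply continuous_comp; auto|]. rewrite a0, a1; auto.
Qed.

Lemma trivial_loop_comp {X Y : space} (g : X -> Y) (x : X) (a : I -> X) :
  continuous g -> trivial_loop x a -> trivial_loop (g x) (fun s => g (a s)).
Proof.
  intros Cg [P [CP [P0 [P1 [PL PR]]]]].
  exists (fun z => g (P z)). split; [apply continuous_comp; auto|].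
  split; [|split; [|split]]; intros; cbv beta;
    [rewrite P0|rewrite P1|rewrite PL|rewrite PR]; reflexivity.
Qed.

Lemma reflects_trivial_loops_of_homotopic_id {X : space} (h : X -> X) :
  homotopic h (fun y => y) -> reflects_trivial_loops h.
Proof.
  intros [H [CH [H0 H1]]] x b [Cb [b0 b1]] [P [CP [P0 [P1 [PL PR]]]]].
  set (Q := fun z : prod_space I I => H (b (fst z), snd z)).
  assert (CQ : continuous Q).
  { apply (@continuous_comp _ (prod_space X I) _ (fun z : prod_space I I => (b (fst z), snd z)) H);
      auto.
    apply continuous_pair; [|apply continuous_snd].
    apply (@continuous_comp (prod_space I I) I X fst b); auto. apply continuous_fst. }
  assert (HQ : forall t, Q (I1, t) = Q (I0, t)) by (intro; unfold Q; simpl; rewrite b0, b1; auto).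
  assert (HP : forall t, P (I1, t) = P (I0, t)) by (intro; rewrite PL, PR; auto).
  set (S := stack X Q P).
  assert (Stop : forall s, S (s, I1) = b s).
  { intro s. unfold S. rewrite stack_top. unfold Q; simpl. apply H1. }
  assert (T : trivial_loop (S (I0, I1)) (fun s => S (s, I1))).
  { apply trivial_loop_square_top.
    - apply continuous_stack; auto. intro p. unfold Q; simpl. rewrite H0. symmetry; apply P0.
    - intro w. apply stack_sides; auto.
    - intro p. unfold S. rewrite !stack_bottom, P1. symmetry; apply P1. }
  rewrite Stop, b0 in T.
  replace b with (fun s => S (s, I1)) by (apply functional_extensionality; auto).
  exact T.
Qed.

Lemma reflects_trivial_loops_of_left_inverse {X Y : space} (f : X -> Y) (g : Y -> X) :
  continuous f -> continuous g -> homotopic (fun x => g (f x)) (fun x => x) ->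
  reflects_trivial_loops f.
Proof.
  intros Cf Cg Hgf x a La T.
  apply (reflects_trivial_loops_of_homotopic_id _ Hgf x a La).
  exact (trivial_loop_comp g _ _ Cg T).
Qed.

Lemma homotopic_id_slice {X : space} (H : prod_space X I -> X) (t : I) :
  continuous H -> (forall y, H (y, I1) = y) -> homotopic (fun y => H (y, t)) (fun y => y).
Proof.
  intros CH H1.
  exists (fun p : prod_space X I => H (fst p, to_I (val t + (1 - val t) * val (snd p)))).
  split; [|split].
  - apply (@continuous_comp (prod_space X I) (prod_space X I) X
             (fun p => (fst p, to_I (val t + (1 - val t) * val (snd p)))) H); auto.
    apply continuous_pair; [apply continuous_fst|]. apply continuous_to_I.
    apply rcontinuous_plus; [apply rcontinuous_const|].
    apply rcontinuous_mult; [apply rcontinuous_const|apply rcontinuous_val, continuous_snd].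
  - intro y; cbn [fst snd]. rewrite val_I0, Rmult_0_r, Rplus_0_r, to_I_val. reflexivity.
  - intro y; cbn [fst snd]. rewrite val_I1, to_I_ge1 by lra. apply H1.
Qed.

Lemma w_pred_map {X Y : space} (f : X -> Y) x :
  continuous f -> reflects_trivial_loops f -> w_pred X x -> w_pred Y (f x).
Proof.
  intros Cf Rf Wx N HN.
  destruct (Wx _ (nbhd_preimage f x N Cf HN)) as [a [La [Na Ta]]].
  exists (fun s => f (a s)). split; [apply loop_at_comp; auto|split; auto].
Qed.

Lemma aw_pred_map {X Y : space} (f : X -> Y) x :
  continuous f -> reflects_trivial_loops f -> aw_pred X x -> aw_pred Y (f x).
Proof.
  intros Cf Rf [a [Ha Hn]]. exists (fun n s => f (a n s)). split.
  - intro n. destruct (Ha n) as [La Ta]. split; [apply loop_at_comp; auto|]. auto.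
  - intros N HN. destruct (Hn _ (nbhd_preimage f x N Cf HN)) as [n0 Hn0]. exists n0. auto.
Qed.

Lemma aw_pred_w_pred {X : space} (x : X) : aw_pred X x -> w_pred X x.
Proof.
  intros [a [Ha Hn]] N HN. destruct (Hn N HN) as [n0 Hn0].
  exists (a n0). destruct (Ha n0). split; [auto|split; auto].
Qed.

(* Intersecting the countable base makes it decreasing, so a non-trivial loop chosen
   in its [n]-th member gives a null-sequence. *)
Lemma first_countable_aw_pred {Y : space} (y : Y) :
  first_countable Y -> w_pred Y y -> aw_pred Y y.
Proof.
  intros FC Wy. destruct (FC y) as [B [HB HBN]].
  set (C := fun n z => forall k, (k <= n)%nat -> B k z).
  assert (HC : forall n, nbhd y (C n)).
  { induction n.
    - apply (nbhd_mono _ _ _ (HB 0%nat)). intros z Bz k Hk.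
      replace k with 0%nat by lia. exact Bz.
    - apply (nbhd_mono _ _ _ (nbhd_and _ _ _ IHn (HB (S n)))). intros z [Cz Bz] k Hk.
      destruct (Nat.eq_dec k (S n)); [subst; auto|]. apply Cz; lia. }
  destruct (choice _ (fun n => Wy _ (HC n))) as [a Ha].
  exists a. split.
  - intro n. destruct (Ha n) as [L [_ T]]; auto.
  - intros N HN. destruct (HBN N HN) as [n Hn]. exists n. intros m Hm s.
    apply Hn. destruct (Ha m) as [_ [Hc _]]. apply (Hc s n Hm).
Qed.

Lemma homotopic_id_subspace {X : space} (P : X -> Prop) (H : prod_space X I -> X)
    (k : subspace X P -> subspace X P) :
  continuous H -> (forall x t, P x -> P (H (x, t))) ->
  (forall z, proj1_sig (k z) = H (proj1_sig z, I0)) -> (forall x, H (x, I1) = x) ->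
  homotopic k (fun z => z).
Proof.
  intros CH HP Hk H1.
  exists (fun p : prod_space (subspace X P) I =>
            exist P (H (proj1_sig (fst p), snd p)) (HP _ (snd p) (proj2_sig (fst p)))).
  split; [|split].
  - apply continuous_into_subspace; simpl.
    apply (@continuous_comp _ (prod_space X I) X
             (fun p : prod_space (subspace X P) I => (proj1_sig (fst p), snd p)) H); auto.
    apply continuous_pair; [|apply continuous_snd].
    apply (@continuous_comp (prod_space (subspace X P) I) (subspace X P) X fst (@proj1_sig _ _));
      [apply continuous_fst|apply continuous_proj1_sig].
  - intro z. apply subspace_eq. simpl. symmetry; apply Hk.
  - intro z. apply subspace_eq. apply H1.
Qed.

Lemma subspace_homotopy_equivalent {X : space} (A B : X -> Prop) (H : prod_space X I -> X) :
  continuous H -> (forall x, H (x, I1) = x) ->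
  (forall x t, A x -> A (H (x, t))) -> (forall x t, B x -> B (H (x, t))) ->
  (forall x, B x -> A x) -> (forall x, A x -> B (H (x, I0))) ->
  homotopy_equivalent (subspace X A) (subspace X B).
Proof.
  intros CH H1 HA HB HBA HAB.
  exists (fun z => exist B (H (proj1_sig z, I0)) (HAB _ (proj2_sig z)) : subspace X B).
  exists (fun z => exist A (proj1_sig z) (HBA _ (proj2_sig z)) : subspace X A).
  split; [|split; [|split]].
  - apply continuous_into_subspace; simpl.
    apply (@continuous_comp (subspace X A) X X (@proj1_sig _ _) (fun x => H (x, I0)));
      [apply continuous_proj1_sig|apply continuous_slice; auto].
  - apply continuous_into_subspace, continuous_proj1_sig.
  - apply (homotopic_id_subspace A H); auto.
  - apply (homotopic_id_subspace B H); auto.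
Qed.

Theorem mainTheorem7 (X : space) :
  ~ homotopy_equivalent (w_space X) (aw_space X) ->
  forall Y : space, first_countable Y -> ~ homotopy_equivalent X Y.
Proof.
  intros Hne Y HY [f [g [Cf [Cg [Hgf Hfg]]]]]. apply Hne.
  pose proof (reflects_trivial_loops_of_left_inverse f g Cf Cg Hgf) as Rf.
  pose proof (reflects_trivial_loops_of_left_inverse g f Cg Cf Hfg) as Rg.
  destruct Hgf as [H [CH [H0 H1]]].
  assert (Rslice : forall t, reflects_trivial_loops (fun y => H (y, t))).
  { intro t. apply reflects_trivial_loops_of_homotopic_id, homotopic_id_slice; auto. }
  apply (subspace_homotopy_equivalent (w_pred X) (aw_pred X) H CH H1).
  - intros x t. apply (w_pred_map (fun y => H (y, t))); auto using continuous_slice.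
  - intros x t. apply (aw_pred_map (fun y => H (y, t))); auto using continuous_slice.
  - apply aw_pred_w_pred.
  - intros x Wx. rewrite H0.
    apply aw_pred_map, first_countable_aw_pred, w_pred_map; auto.
Qed.
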